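(* Let $n\geq 4$ and $\alpha_2,\dots,\alpha_n\in\mathbb{C}$ with $\alpha_2=\alpha_3=0$ and $\alpha_4\neq0$. Then the transposed Poisson algebra $\mathbf{TP}(\alpha_2,\dots,\alpha_n)$ is isomorphic to $\mathbf{TP}(0,0,1,\alpha,0,\dots,0)$ for some $\alpha\in\mathbb{C}$, i.e. to the algebra with parameters $\alpha_4'=1$, $\alpha_5'=\alpha$ (present only when $n\geq5$), and all other $\alpha_i'=0$.
   Context: $\mu_0^n$ is the complex commutative associative algebra with basis $\{e_1,\dots,e_n\}$ and $e_i\cdot e_j=e_{i+j}$ for $2\leq i+j\leq n$, other products zero. For $\alpha_2,\dots,\alpha_n\in\mathbb{C}$, $\mathbf{TP}(\alpha_2,\dots,\alpha_n)$ denotes $\mu_0^n$ with its associative product together with the bracket $[e_i,e_j]=(j-i)\sum_{t=i+j-1}^{n}\alpha_{t-i-j+3}e_t$ for $3\leq i+j\leq n+1$, other brackets of basis elements zero. Isomorphisms preserve both operations. *)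

(* The complex field is modelled as R[i] = complex R for
   R : realType (any complete archimedean ordered field, i.e. the reals). *)
From HB Require Import structures.
From mathcomp Require Import all_boot all_order all_algebra.
From mathcomp Require Import complex.
From mathcomp Require Import reals.
Set Implicit Arguments. Unset Strict Implicit. Unset Printing Implicit Defensive.
Import Order.TTheory GRing.Theory Num.Theory.
Local Open Scope ring_scope.
Local Open Scope complex_scope.

(* Elements of mu_0^n are row vectors x : 'rV[C]_n ; the coordinate of index
   k : 'I_n is the coefficient of the basis vector e_(k+1). *)

Section TP.
Variable C : comRingType.

(* coefficient of e_t in e_i . e_j (1-based indices) *)
Definition mu_coef (n i j t : nat) : C :=
  if (2 <= i + j <= n)%N && (t == i + j)%N then 1 else 0.

(* coefficient of e_t in [e_i, e_j] for TP(alpha_2,...,alpha_n) *)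
Definition br_coef (alpha : nat -> C) (n i j t : nat) : C :=
  if (3 <= i + j <= n.+1)%N && (i + j - 1 <= t <= n)%N
  then (j%:R - i%:R) * alpha (t + 3 - (i + j))%N else 0.

Definition TPmul (n : nat) (x y : 'rV[C]_n) : 'rV[C]_n :=
  \row_(t < n) \sum_(i < n) \sum_(j < n)
     x 0 i * y 0 j * mu_coef n i.+1 j.+1 t.+1.

Definition TPbr (alpha : nat -> C) (n : nat) (x y : 'rV[C]_n) : 'rV[C]_n :=
  \row_(t < n) \sum_(i < n) \sum_(j < n)
     x 0 i * y 0 j * br_coef alpha n i.+1 j.+1 t.+1.

End TP.

Definition TP_isomorphic (C : comUnitRingType) (n : nat)
    (alpha beta : nat -> C) : Prop :=
  exists f : 'M[C]_n, f \in unitmx /\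
    (forall x y : 'rV[C]_n, TPmul (x *m f) (y *m f) = TPmul x y *m f) /\
    (forall x y : 'rV[C]_n,
        TPbr beta (x *m f) (y *m f) = TPbr alpha x y *m f).

Definition TP_normal_params (C : comRingType) (a : C) : nat -> C :=
  fun k => if k == 4%N then 1 else if k == 5%N then a else 0.

From HB Require Import structures.
From mathcomp Require Import all_boot all_order all_algebra.
From mathcomp Require Import complex.
From mathcomp Require Import reals.
From mathcomp Require Import ring zify.
Import Order.TTheory GRing.Theory Num.Theory.
Set Implicit Arguments. Unset Strict Implicit. Unset Printing Implicit Defensive.
Local Open Scope ring_scope.

(* Represent x in mu_0^n by the power series X * rVpoly x modulo X^(n+1), so that
   rVpoly x itself is taken modulo X^n.  The product becomes multiplication of
   power series, and the bracket of TP(alpha) becomes (P, Q) |-> W(P, Q) U_alpha,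
   where W = [wronsk] and U_alpha = [br_poly alpha] = sum_m alpha_(m+2) X^m.
   A substitution X |-> p = X p1 with p1(0) invertible preserves the product, and
   since W(P o p, Q o p) = (W(P, Q) o p) p', it carries the bracket of TP(beta) to
   that of TP(alpha) as soon as p' U_beta = U_alpha o p modulo X^n.
   If alpha_2 = alpha_3 = 0 then U_alpha = alpha_4 X^2 + alpha_5 X^3 + O(X^4).  For
   U_beta = X^2 + a X^3 with a = alpha_5 / alpha_4^2, the series p = X / alpha_4
   solves the congruence modulo X^4, and a solution modulo X^k (k >= 4) becomes
   one modulo X^(k+1) after adding d X^(k-1) to p: this changes the error by
   (k-3) d X^k, which can be cancelled in characteristic 0. *)

Section CongruenceModXn.
Variable R : comNzRingType.
Implicit Types P Q S T : {poly R}.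

Definition eqmodXn k P Q := exists g, P = Q + 'X^k * g.

Lemma eqmodXn_refl k P : eqmodXn k P P.
Proof. by exists 0; rewrite mulr0 addr0. Qed.

Lemma eqmodXn_trans k P Q S : eqmodXn k P Q -> eqmodXn k Q S -> eqmodXn k P S.
Proof. by case=> g -> [h ->]; exists (g + h); ring. Qed.

Lemma eqmodXn_sub k P Q S T :
  eqmodXn k P Q -> eqmodXn k S T -> eqmodXn k (P - S) (Q - T).
Proof. by case=> g -> [h ->]; exists (g - h); ring. Qed.

Lemma eqmodXn_mul k P Q S T :
  eqmodXn k P Q -> eqmodXn k S T -> eqmodXn k (P * S) (Q * T).
Proof. by case=> g -> [h ->]; exists (g * T + Q * h + 'X^k * g * h); ring. Qed.

Lemma mulX_derivXn k : 'X * ('X^k)^`() = 'X^k *+ k :> {poly R}.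
Proof. by rewrite derivXn mulrnAr; case: k => [|k]; rewrite ?mulr0n // -exprS. Qed.

(* [X d/dX] preserves every congruence mod [X^k], since it maps [X^k] to [k X^k]. *)
Lemma eqmodXn_mulX_deriv k P Q :
  eqmodXn k P Q -> eqmodXn k ('X * P^`()) ('X * Q^`()).
Proof.
case=> g ->; exists (g *+ k + 'X * g^`()).
by rewrite derivD derivM mulrDr mulrDr mulrA mulX_derivXn; ring.
Qed.

Lemma eqmodXn_comp k P Q p1 :
  eqmodXn k P Q -> eqmodXn k (P \Po ('X * p1)) (Q \Po ('X * p1)).
Proof.
case=> g ->; exists (p1 ^+ k * (g \Po ('X * p1))).
by rewrite comp_polyD comp_polyM rmorphXn /= comp_polyX exprMn; ring.
Qed.

Lemma poly_rV_eqmodXn k P Q : eqmodXn k P Q -> poly_rV P = poly_rV Q :> 'rV_k.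
Proof.
case=> g ->; apply/rowP => t.
by rewrite linearD !mxE coefXnM ltn_ord addr0.
Qed.

Lemma eqmodXn_rVpoly_poly_rV k P : eqmodXn k (rVpoly (poly_rV P : 'rV_k)) P.
Proof.
exists (- drop_poly k P).
rewrite -{2}(poly_take_drop k P) [_ * 'X^k]mulrC mulrN addrK.
apply/polyP => i; rewrite coef_rVpoly coef_take_poly.
by case: insubP => [t /= -> <- | /negbTE ->]; rewrite ?mxE.
Qed.

End CongruenceModXn.

Section Wronskian.
Variable R : comNzRingType.
Implicit Types P Q p : {poly R}.

Definition wronsk P Q := P * Q^`() - P^`() * Q.

Lemma wronskMl p P Q : wronsk (p * P) (p * Q) = p ^+ 2 * wronsk P Q.
Proof. by rewrite /wronsk !derivM; ring. Qed.

Lemma wronsk_comp P Q p : wronsk (P \Po p) (Q \Po p) = (wronsk P Q \Po p) * p^`().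
Proof. by rewrite /wronsk !deriv_comp comp_polyB !comp_polyM; ring. Qed.

Lemma eqmodXn_mulX_wronsk k P Q S T : eqmodXn k P Q -> eqmodXn k S T ->
  eqmodXn k ('X * wronsk P S) ('X * wronsk Q T).
Proof.
move=> PQ ST; have XPQ := eqmodXn_mulX_deriv PQ; have XST := eqmodXn_mulX_deriv ST.
have XW A B : 'X * wronsk A B = A * ('X * B^`()) - ('X * A^`()) * B.
  by rewrite /wronsk; ring.
by rewrite !XW; apply: eqmodXn_sub; apply: eqmodXn_mul.
Qed.

End Wronskian.

Lemma comp_poly_taylor (R : comNzRingType) (P p d : {poly R}) :
  exists r, P \Po (p + d) = P \Po p + d * (P^`() \Po p) + d ^+ 2 * r.
Proof.
elim/poly_ind: P => [|P c [r IH]].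
  by exists 0; rewrite deriv0 !comp_poly0; ring.
exists (r * (p + d) + (P^`() \Po p)).
rewrite derivMXaddC !comp_poly_MXaddC comp_polyD comp_polyM comp_polyX IH; ring.
Qed.

Section PolynomialModel.
Variables (R : comNzRingType) (n : nat).
Implicit Types x y : 'rV[R]_n.

Definition br_poly (alpha : nat -> R) : {poly R} := \poly_(m < n) alpha m.+2.

Lemma rVpolyE x : rVpoly x = \sum_(i < n) x 0 i *: 'X^i.
Proof. by rewrite /rVpoly poly_def; apply: eq_bigr => i _; rewrite valK. Qed.

Lemma TPmul_poly x y : TPmul x y = poly_rV ('X * (rVpoly x * rVpoly y)).
Proof.
apply/rowP => t; rewrite !mxE !rVpolyE mulr_suml mulr_sumr coef_sum.
apply: eq_bigr => i _; rewrite !mulr_sumr coef_sum; apply: eq_bigr => j _.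
rewrite -scalerAl -!scalerAr scalerA coefZ -exprD -exprS coefXn /mu_coef.
congr (_ * _); have := ltn_ord t.
rewrite addSn addnS eqSS; case: eqP => [tij | _] lt; rewrite ?andbT ?andbF //.
by rewrite ifT //; lia.
Qed.

Lemma mulX_wronsk_rVpoly x y : 'X * wronsk (rVpoly x) (rVpoly y) =
  \sum_(i < n) \sum_(j < n) (x 0 i * y 0 j * (j%:R - i%:R)) *: 'X^(i + j).
Proof.
have XD (z : 'rV[R]_n) : 'X * (rVpoly z)^`() = \sum_(i < n) (z 0 i * i%:R) *: 'X^i.
  rewrite rVpolyE raddf_sum mulr_sumr; apply: eq_bigr => i _.
  by rewrite /= derivZ -scalerAr mulX_derivXn -scalerMnr scalerMnl mulr_natr.
have -> : 'X * wronsk (rVpoly x) (rVpoly y) =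
    rVpoly x * ('X * (rVpoly y)^`()) - ('X * (rVpoly x)^`()) * rVpoly y.
  by rewrite /wronsk; ring.
rewrite !XD !rVpolyE mulr_suml mulr_suml -sumrB; apply: eq_bigr => i _.
rewrite !mulr_sumr -sumrB; apply: eq_bigr => j _.
rewrite -!scalerAl -!scalerAr !scalerA -scalerBl exprD; congr (_ *: _); ring.
Qed.

Lemma TPbr_poly alpha x y : TPbr alpha x y =
  poly_rV ('X * wronsk (rVpoly x) (rVpoly y) * br_poly alpha).
Proof.
apply/rowP => t; rewrite !mxE mulX_wronsk_rVpoly mulr_suml coef_sum.
apply: eq_bigr => i _; rewrite mulr_suml coef_sum; apply: eq_bigr => j _.
rewrite -scalerAl coefZ coefXnM coef_poly /br_coef -[RHS]mulrA; congr (_ * _).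
have tn := ltn_ord t; have -> : (j.+1%:R - i.+1%:R : R) = j%:R - i%:R.
  by rewrite !mulrS; ring.
case: (ltnP t (i + j)) => [lt | le].
  by rewrite ifF ?mulr0 //; apply/negbTE/negP => /and3P [] _; lia.
rewrite [in RHS]ifT; last lia.
have [ij0 | ij_gt0] := posnP (i + j).
  have [-> ->] : i = 0 :> nat /\ j = 0 :> nat by lia.
  by rewrite subrr !mul0r; case: [&& _, _ & _].
rewrite ifT; last by apply/and3P; split; lia.
by have -> : (t.+1 + 3 - (i.+1 + j.+1) = (t - (i + j)).+2)%N by lia.
Qed.

End PolynomialModel.

Section Substitution.
Variables (R : comUnitRingType) (n : nat) (p1 : {poly R}).
Local Notation p := ('X * p1).

Definition subst_mx : 'M[R]_n := \matrix_(i < n) poly_rV (p1 * p ^+ i).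

Lemma mul_subst_mx x : x *m subst_mx = poly_rV (p1 * (rVpoly x \Po p)).
Proof.
rewrite mulmx_sum_row rVpolyE raddf_sum mulr_sumr linear_sum; apply: eq_bigr => i _.
by rewrite rowK /= comp_polyZ rmorphXn /= comp_polyX -scalerAr linearZ.
Qed.

Lemma subst_mx_unit : p1`_0 \is a GRing.unit -> subst_mx \in unitmx.
Proof.
have subst_mxE i t : subst_mx i t = ('X^i * p1 ^+ i.+1)`_t.
  by rewrite !mxE exprMn mulrCA -exprS.
move=> p10; rewrite unitmxE -det_tr det_trig.
  apply: unitr_prod => i _; rewrite mxE subst_mxE coefXnM ltnn subnn.
  by rewrite -horner_coef0 horner_exp horner_coef0 unitrX.
by apply/is_trig_mxP => i j ij; rewrite mxE subst_mxE coefXnM ij.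
Qed.

Lemma rVpoly_mul_subst_mx x :
  eqmodXn n (rVpoly (x *m subst_mx)) (p1 * (rVpoly x \Po p)).
Proof. by rewrite mul_subst_mx; apply: eqmodXn_rVpoly_poly_rV. Qed.

Lemma poly_rV_mul_subst_mx P :
  (poly_rV P : 'rV_n) *m subst_mx = poly_rV (p1 * (P \Po p)).
Proof.
rewrite mul_subst_mx; apply: poly_rV_eqmodXn; apply: eqmodXn_mul (eqmodXn_refl _ _) _.
by apply: eqmodXn_comp; apply: eqmodXn_rVpoly_poly_rV.
Qed.

Lemma subst_mx_TPmul x y :
  TPmul (x *m subst_mx) (y *m subst_mx) = TPmul x y *m subst_mx.
Proof.
rewrite !TPmul_poly poly_rV_mul_subst_mx; apply: poly_rV_eqmodXn.
have -> : p1 * ('X * (rVpoly x * rVpoly y) \Po p) =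
    'X * (p1 * (rVpoly x \Po p) * (p1 * (rVpoly y \Po p))).
  by rewrite !comp_polyM comp_polyX; ring.
apply: eqmodXn_mul (eqmodXn_refl _ _) _.
by apply: eqmodXn_mul; apply: rVpoly_mul_subst_mx.
Qed.

Lemma subst_mx_TPbr alpha beta :
  eqmodXn n (p^`() * br_poly n beta) (br_poly n alpha \Po p) ->
  forall x y, TPbr beta (x *m subst_mx) (y *m subst_mx) = TPbr alpha x y *m subst_mx.
Proof.
move=> eqU x y; rewrite !TPbr_poly poly_rV_mul_subst_mx; apply: poly_rV_eqmodXn.
have eqW := eqmodXn_mulX_wronsk (rVpoly_mul_subst_mx x) (rVpoly_mul_subst_mx y).
apply: eqmodXn_trans (eqmodXn_mul eqW (eqmodXn_refl _ (br_poly n beta))) _.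
set W := wronsk (rVpoly x) (rVpoly y).
rewrite wronskMl wronsk_comp -/W.
have -> : p1 * ('X * W * br_poly n alpha \Po p) =
    'X * p1 ^+ 2 * (W \Po p) * (br_poly n alpha \Po p).
  by rewrite !comp_polyM comp_polyX; ring.
have -> : 'X * (p1 ^+ 2 * ((W \Po p) * p^`())) * br_poly n beta =
    'X * p1 ^+ 2 * (W \Po p) * (p^`() * br_poly n beta) by ring.
exact: eqmodXn_mul (eqmodXn_refl _ _) eqU.
Qed.

Lemma TP_isomorphic_subst alpha beta :
  p1`_0 \is a GRing.unit ->
  eqmodXn n (p^`() * br_poly n beta) (br_poly n alpha \Po p) ->
  TP_isomorphic n alpha beta.
Proof.
move=> p10 eqU; exists subst_mx; split; first exact: subst_mx_unit.
by split; [apply: subst_mx_TPmul | apply: subst_mx_TPbr].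
Qed.

End Substitution.

Lemma polyC_coef0_mulX (R : comNzRingType) (P : {poly R}) :
  exists Q, P = (P`_0)%:P + 'X * Q.
Proof.
exists (drop_poly 1 P); rewrite -{1}(poly_take_drop 1 P) expr1 mulrC; congr (_ + _).
by apply/polyP => i; rewrite coef_take_poly coefC; case: i.
Qed.

Section NormalFormEquation.
Variable F : fieldType.
Hypothesis F_pchar0 : [pchar F] =i pred0.
Variables (u2 u3 : F) (V : {poly F}).
Hypothesis u2_neq0 : u2 != 0.
Local Notation U := (u2%:P * 'X^2 + u3%:P * 'X^3 + 'X^4 * V).
Local Notation c := u2^-1.
Local Notation T := ('X^2 + (u3 * c ^+ 2)%:P * 'X^3).

Lemma normal_form_eq_base :
  eqmodXn 4 (('X * c%:P)^`() * T) (U \Po ('X * c%:P)).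
Proof.
have u2c : u2%:P * c%:P = 1 by rewrite -polyCM mulfV.
exists (- (c%:P ^+ 4 * (V \Po ('X * c%:P)))).
rewrite !comp_polyD !comp_polyM !comp_polyC !comp_polyX !polyCM.
transitivity (c%:P * 'X^2 * (u2%:P * c%:P) + u3%:P * c%:P ^+ 3 * 'X^3).
  by rewrite u2c mulr1 derivM derivX derivC; ring.
ring.
Qed.

Lemma normal_form_eq_step k p1 :
  eqmodXn 1 p1 c%:P -> eqmodXn k.+4 (('X * p1)^`() * T) (U \Po ('X * p1)) ->
  exists2 p2, eqmodXn 1 p2 c%:P &
    eqmodXn k.+1.+4 (('X * p2)^`() * T) (U \Po ('X * p2)).
Proof.
move=> [q1 p1E] [G errE].
have [G1 GE] := polyC_coef0_mulX G.
set g0 := G`_0 in GE.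
have k1_neq0 : (k.+1%:R : F) != 0 by move/pcharf0P: F_pchar0 => ->.
(* Adding [d X^(k+3)] to [X p1] shifts the [X^(k+4)]-coefficient of the error
   by [(k+1) d]. *)
set d := - g0 / k.+1%:R.
have g0E : g0%:P = - (k.+1%:R * d%:P).
  by rewrite -polyC_natr -polyCM -polyCN mulrC /d divfK // opprK.
have u2c : u2%:P * c%:P = 1 by rewrite -polyCM mulfV.
exists (p1 + d%:P * 'X^(k.+2)).
  by exists (q1 + d%:P * 'X^(k.+1)); rewrite p1E !exprS; ring.
set Z := u2%:P *+ 2 * q1 + (u3 *+ 3)%:P * p1 ^+ 2
  + 'X * p1 ^+ 3 * (V \Po ('X * p1)) *+ 4 + 'X^2 * p1 ^+ 4 * (V^`() \Po ('X * p1)).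
have U'E : U^`() \Po ('X * p1) = 'X *+ 2 + 'X^2 * Z.
  rewrite !derivE /= !comp_polyD !comp_polyM ![_ *+ _ \Po _]raddfMn /=.
  rewrite !comp_polyC !comp_polyM !comp_polyX.
  by rewrite {1}p1E -[in RHS](mulr1 ('X *+ 2)) -u2c /Z; ring.
have [r taylorE] := comp_poly_taylor U ('X * p1) (d%:P * 'X^(k.+3)).
have -> : 'X * (p1 + d%:P * 'X^(k.+2)) = 'X * p1 + d%:P * 'X^(k.+3).
  by rewrite !exprS; ring.
exists (G1 + k.+3%:R * d%:P * (u3 * c ^+ 2)%:P - d%:P * Z - d%:P ^+ 2 * 'X^(k.+1) * r).
rewrite derivD mulrDl errE taylorE U'E GE g0E derivM derivC mul0r add0r derivXn /=.
rewrite -mulr_natl !exprS; ring.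
Qed.

Lemma normal_form_eq_solvable k : exists2 p1, eqmodXn 1 p1 c%:P &
  eqmodXn k.+4 (('X * p1)^`() * T) (U \Po ('X * p1)).
Proof.
elim: k => [|k [p1 p1c eqU]].
  by exists c%:P; [apply: eqmodXn_refl | apply: normal_form_eq_base].
exact: normal_form_eq_step p1c eqU.
Qed.

End NormalFormEquation.

Lemma br_poly_TP_normal_params (R : comNzRingType) n (a : R) : (4 <= n)%N ->
  br_poly n (TP_normal_params a) = 'X^2 + a%:P * 'X^3.
Proof.
move=> n4; apply/polyP => i; rewrite coef_poly !coefD !coefCM !coefXn /TP_normal_params.
case: i => [|[|[|[|i]]]] /=.
- by rewrite ifT ?mulr0 ?addr0 //; lia.
- by rewrite ifT ?mulr0 ?addr0 //; lia.
- by rewrite ifT ?mulr0 ?addr0 //; lia.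
- by rewrite ifT ?mulr1 ?add0r //; lia.
- by rewrite mulr0 addr0; case: ifP.
Qed.

Lemma br_poly_expansion (R : comNzRingType) n (alpha : nat -> R) :
  (4 <= n)%N -> alpha 2%N = 0 -> alpha 3%N = 0 ->
  br_poly n alpha = (alpha 4%N)%:P * 'X^2 + (alpha 5%N)%:P * 'X^3
                    + 'X^4 * drop_poly 4 (br_poly n alpha).
Proof.
move=> n4 alpha2 alpha3.
rewrite -{1}(poly_take_drop 4 (br_poly n alpha)) [_ * 'X^4]mulrC; congr (_ + _).
apply/polyP => i; rewrite coef_take_poly coef_poly !coefD !coefCM !coefXn.
case: i => [|[|[|[|i]]]] /=.
- by rewrite ifT ?alpha2 ?mulr0 ?addr0 //; lia.
- by rewrite ifT ?alpha3 ?mulr0 ?addr0 //; lia.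
- by rewrite ifT ?mulr0 ?addr0 ?mulr1 //; lia.
- by rewrite ifT ?mulr0 ?add0r ?mulr1 //; lia.
- by rewrite !mulr0 addr0.
Qed.

Theorem mainTheorem9 (R : realType) (n : nat) (alpha : nat -> R[i])
  (hn : (4 <= n)%N) (h2 : alpha 2%N = 0) (h3 : alpha 3%N = 0)
  (h4 : alpha 4%N != 0) :
  exists a : R[i], TP_isomorphic n alpha (TP_normal_params a).
Proof.
have [p1 p1c eqU] := normal_form_eq_solvable (@pchar_num _) (alpha 5%N)
  (drop_poly 4 (br_poly n alpha)) h4 (n - 4).
rewrite -(br_poly_expansion hn h2 h3) (_ : (n - 4).+4 = n) in eqU; last lia.
exists (alpha 5%N * (alpha 4%N)^-1 ^+ 2); apply: (TP_isomorphic_subst (p1 := p1)).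
  by case: p1c => g ->; rewrite coefD coefC expr1 coefXM /= addr0 unitfE invr_eq0.
by rewrite br_poly_TP_normal_params.
Qed.
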